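(* Let $k,m$ be positive integers with $k>1$, let $\mathbf{A}$ be a finite algebra having a $k$-edge operation among its term operations, and let $F\subseteq G$ be subuniverses of $\mathbf{A}^m$. Assume $\pi_T(F)=\pi_T(G)$ for all $T\subseteq\{1,\dots,m\}$ with $|T|<k$, and $\varphi_i(G)\subseteq\varphi_i(F)$ for all $i\in\{1,\dots,m\}$. Then $F=G$.
   Context: For $k\ge 2$, a $k$-edge operation on $A$ is $t:A^{k+1}\to A$ such that for all $x,y\in A$: $t(y,y,x,x,\dots,x)=x$, $t(y,x,y,x,\dots,x)=x$, and for each $i\in\{4,\dots,k+1\}$, $t(x,\dots,x,y,x,\dots,x)=x$ with $y$ in position $i$. For $\mathbf{a}=(a_1,\dots,a_m)\in A^m$ and $T\subseteq\{1,\dots,m\}$, $\pi_T(\mathbf{a}):=(a_i)_{i\in T}$, and $\pi_T(F):=\{\pi_T(\mathbf{a}):\mathbf{a}\in F\}$. For $F\subseteq A^m$ and $i\in\{1,\dots,m\}$, $\varphi_i(F):=\{(a_i,b_i)\in A^2 : \mathbf{a},\mathbf{b}\in F,\ \pi_{\{1,\dots,i-1\}}(\mathbf{a})=\pi_{\{1,\dots,i-1\}}(\mathbf{b})\}$. *)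

From mathcomp Require Import all_boot.
Set Implicit Arguments. Unset Strict Implicit. Unset Printing Implicit Defensive.

(* An algebra is given by a finite carrier A, a type I of operation symbols,
   an arity function ar, and the interpretation op of each symbol. *)

Inductive term (I : Type) (ar : I -> nat) (n : nat) : Type :=
| Var : 'I_n -> term ar n
| App : forall i : I, ('I_(ar i) -> term ar n) -> term ar n.

Fixpoint eval (A : Type) (I : Type) (ar : I -> nat)
    (op : forall i : I, ('I_(ar i) -> A) -> A) (n : nat) (t : term ar n)
    (x : 'I_n -> A) : A :=
  match t with
  | Var j => x j
  | App i ts => op i (fun j => eval op (ts j) x)
  end.

Definition term_op (A : Type) (I : Type) (ar : I -> nat)
    (op : forall i : I, ('I_(ar i) -> A) -> A) (n : nat)
    (f : ('I_n -> A) -> A) : Prop :=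
  exists t : term ar n, forall x, eval op t x = f x.

(* k-edge operation t : A^(k+1) -> A (positions are 0-based here:
   paper positions 1,2,3,i correspond to 0,1,2,i-1). *)
Definition edge_op (A : Type) (k : nat) (t : ('I_k.+1 -> A) -> A) : Prop :=
  forall x y : A,
    [/\ t (fun j => if (val j == 0) || (val j == 1) then y else x) = x,
        t (fun j => if (val j == 0) || (val j == 2) then y else x) = x
      & forall i : 'I_k.+1, 3 <= val i ->
          t (fun j => if j == i then y else x) = x].

Definition subuniverse (A : finType) (I : Type) (ar : I -> nat)
    (op : forall i : I, ('I_(ar i) -> A) -> A) (m : nat)
    (F : {set {ffun 'I_m -> A}}) : Prop :=
  forall (i : I) (a : 'I_(ar i) -> {ffun 'I_m -> A}),
    (forall j, a j \in F) -> [ffun c => op i (fun j => a j c)] \in F.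

(* pi_T(a) = (a_i)_{i in T}, encoded as a function on 'I_m that is
   undefined (None) outside T. *)
Definition proj (A : finType) (m : nat) (T : {set 'I_m}) (a : {ffun 'I_m -> A})
  : {ffun 'I_m -> option A} :=
  [ffun i => if i \in T then Some (a i) else None].

Definition projS (A : finType) (m : nat) (T : {set 'I_m})
    (F : {set {ffun 'I_m -> A}}) : {set {ffun 'I_m -> option A}} :=
  [set proj T a | a in F].

(* phi_i(F) = {(a_i,b_i) : a,b in F, a and b agree on coordinates before i}
   (0-based: the coordinates j < i). *)
Definition phi (A : finType) (m : nat) (i : 'I_m) (F : {set {ffun 'I_m -> A}})
  : {set A * A} :=
  [set p : A * A | [exists a in F, exists b in F,
     (proj [set j : 'I_m | val j < val i] a ==
      proj [set j : 'I_m | val j < val i] b) && (p == (a i, b i))]].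

From mathcomp Require Import all_boot zify.
From Stdlib Require Import FunctionalExtensionality.
Set Implicit Arguments. Unset Strict Implicit. Unset Printing Implicit Defensive.

(* Fix b in G; by induction on S (first on its largest coordinate, then on
   its size) b restricted to S is the restriction of some element of F.
   Small S are given by the hypothesis on projections.  For a large S with
   largest coordinate i, an element a of F agreeing with b below i yields,
   through phi_i, elements c, d of F agreeing below i with c_i = a_i and
   d_i = b_i.  The edge term then corrects c towards b one coordinate of
   S \ {i} at a time, feeding its last k - 2 arguments with elements of F
   that agree with b on S except at one (distinct) coordinate each: in every
   column at most one of them deviates, which the third edge identity
   absorbs.  In the end d agrees with c below i and with b at i. *)

Section Projections.
Variables (A : finType) (m : nat).
Implicit Types (S : {set 'I_m}) (a b : {ffun 'I_m -> A}).

Definition prefix (i : 'I_m) : {set 'I_m} := [set j : 'I_m | val j < val i].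

Lemma proj_eqP S a b : reflect {in S, a =1 b} (proj S a == proj S b).
Proof.
apply: (iffP eqP) => [e j jS|e]; last first.
  by apply/ffunP => j; rewrite !ffunE; case: ifP => // /e ->.
by have := congr1 (fun f : {ffun _ -> _} => f j) e; rewrite !ffunE jS => -[].
Qed.

Lemma projSP S (F : {set {ffun 'I_m -> A}}) b :
  reflect (exists2 a, a \in F & {in S, a =1 b}) (proj S b \in projS S F).
Proof.
apply: (iffP imsetP) => [[a aF e]|[a aF e]]; exists a => //.
  by apply/proj_eqP; rewrite e.
by apply/esym/eqP/proj_eqP.
Qed.

Lemma phiP i (F : {set {ffun 'I_m -> A}}) x y :
  reflect (exists a b, [/\ a \in F, b \in F, {in prefix i, a =1 b}
                         & (a i, b i) = (x, y)])
          ((x, y) \in phi i F).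
Proof.
rewrite inE; apply: (iffP existsP) => [[a /andP[aF /existsP[b]]]|[a [b [aF bF e exy]]]].
  by case/and3P=> bF /proj_eqP e /eqP exy; exists a, b.
exists a; rewrite aF; apply/existsP; exists b.
by rewrite bF exy eqxx andbT; apply/proj_eqP.
Qed.

End Projections.

Section EdgeIdentities.
Variables (T : eqType) (k : nat) (t : ('I_k.+1 -> T) -> T).
Hypothesis he : edge_op t.

Definition mix (x0 x1 x2 : T) (h : 'I_k.+1 -> T) (p : 'I_k.+1) : T :=
  match val p with 0 => x0 | 1 => x1 | 2 => x2 | _ => h p end.

Lemma edge_mix_yyx x y h : (forall p, 3 <= val p -> h p = x) -> t (mix y y x h) = x.
Proof.
move=> hx; have [E _ _] := he x y; rewrite -[RHS]E; congr t.
by apply: functional_extensionality; case=> [[|[|[|n]]] lt]; rewrite /mix //= hx.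
Qed.

Lemma edge_mix_yxy x y h : (forall p, 3 <= val p -> h p = x) -> t (mix y x y h) = x.
Proof.
move=> hx; have [_ E _] := he x y; rewrite -[RHS]E; congr t.
by apply: functional_extensionality; case=> [[|[|[|n]]] lt]; rewrite /mix //= hx.
Qed.

Lemma edge_mix_nu x h :
    (forall p q, 3 <= val p -> 3 <= val q -> h p != x -> h q != x -> p = q) ->
  t (mix x x x h) = x.
Proof.
move=> h_once; case: (pickP [pred p : 'I_k.+1 | (3 <= val p) && (h p != x)]).
  move=> p0 /andP[p0_ge3 hp0]; have [_ _ E] := he x (h p0).
  rewrite -[RHS](E p0 p0_ge3); congr t; apply: functional_extensionality => q.
  rewrite /mix; case: eqP => [->|ne]; first by case: (val p0) p0_ge3 => [|[|[|n]]].
  case: (ltnP (val q) 3) => [|q_ge3]; first by case: (val q) => [|[|[|n]]].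
  have -> : val q = (val q - 3).+3 by lia.
  by case: (eqVneq (h q) x) => // hq; case: ne; apply: h_once.
move=> none; have [E _ _] := he x x; rewrite -[RHS]E; congr t.
apply: functional_extensionality; case=> [[|[|[|n]]] lt]; rewrite /mix //=.
by have /= /negbFE /eqP := none (Ordinal lt).
Qed.

End EdgeIdentities.

Lemma exists_shifted_injection (T : finType) (R : {set T}) (x0 : T) (d n : nat) :
    n <= #|R| + d ->
  exists g : 'I_n -> T, (forall p, d <= val p -> g p \in R) /\
    (forall p q, d <= val p -> d <= val q -> g p = g q -> p = q).
Proof.
move=> hn; have lt_size (p : 'I_n) : d <= val p -> val p - d < size (enum R).
  by rewrite -cardE; have : val p < n := ltn_ord p; lia.
exists (fun p => nth x0 (enum R) (val p - d)); split=> [p hp|p q hp hq /eqP].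
  by rewrite -mem_enum mem_nth ?lt_size.
rewrite nth_uniq ?enum_uniq ?lt_size // => /eqP e.
by apply: val_inj; lia.
Qed.

Section TermClosure.
Variables (A : finType) (I : Type) (ar : I -> nat).
Variables (op : forall i : I, ('I_(ar i) -> A) -> A) (m : nat).
Variables (F : {set {ffun 'I_m -> A}}) (hF : subuniverse op F).

Lemma subuniverse_eval n (tm : term ar n) (v : 'I_n -> {ffun 'I_m -> A}) :
  (forall p, v p \in F) -> [ffun c => eval op tm (fun p => v p c)] \in F.
Proof.
move=> vF; elim: tm => [j|i ts IH] /=.
  by have -> : [ffun c => v j c] = v j by apply/ffunP => c; rewrite ffunE.
have := @hF i (fun j => [ffun c => eval op (ts j) (fun p => v p c)]) IH.
congr (_ \in F); apply/ffunP => c; rewrite !ffunE; congr (op _).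
by apply: functional_extensionality => j; rewrite ffunE.
Qed.

Lemma subuniverse_term_op n (f : ('I_n -> A) -> A) (v : 'I_n -> {ffun 'I_m -> A}) :
  term_op op f -> (forall p, v p \in F) -> [ffun c => f (fun p => v p c)] \in F.
Proof.
move=> [tm htm] /(subuniverse_eval tm); congr (_ \in F).
by apply/ffunP => c; rewrite !ffunE htm.
Qed.

Variables (k : nat) (t : ('I_k.+1 -> A) -> A).

Definition edge_comb (x0 x1 x2 : {ffun 'I_m -> A}) (h : 'I_k.+1 -> {ffun 'I_m -> A}) :=
  [ffun j => t (fun p => mix x0 x1 x2 h p j)].

Lemma edge_combE x0 x1 x2 h j :
  edge_comb x0 x1 x2 h j = t (mix (x0 j) (x1 j) (x2 j) (fun p => h p j)).
Proof.
rewrite ffunE; congr t; apply: functional_extensionality => p.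
by rewrite /mix; case: (val p) => [|[|[|n]]].
Qed.

Lemma edge_comb_in x0 x1 x2 h :
    term_op op t -> [/\ x0 \in F, x1 \in F & x2 \in F] ->
    (forall p, 3 <= val p -> h p \in F) ->
  edge_comb x0 x1 x2 h \in F.
Proof.
move=> ht [x0F x1F x2F] hF3; apply: subuniverse_term_op => // p.
by case: p => [[|[|[|n]]] lt]; rewrite /mix //=; apply: hF3.
Qed.

End TermClosure.

Section Extension.
Variables (A : finType) (I : Type) (ar : I -> nat).
Variables (op : forall i : I, ('I_(ar i) -> A) -> A) (k m : nat).
Variables (t : ('I_k.+1 -> A) -> A) (F : {set {ffun 'I_m -> A}}).
Hypotheses (hF : subuniverse op F) (ht : term_op op t) (he : edge_op t).
Variables (b : {ffun 'I_m -> A}) (S : {set 'I_m}) (i : 'I_m).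
Hypotheses (hSk : k <= #|S|) (iS : i \in S).
Hypothesis hdel : forall j, j \in S :\ i -> proj (S :\ j) b \in projS (S :\ j) F.

Lemma edge_witnesses j0 : j0 \in S :\ i ->
  exists h : 'I_k.+1 -> {ffun 'I_m -> A},
  [/\ forall p, 3 <= val p -> h p \in F,
      forall p, 3 <= val p -> h p i = b i /\ h p j0 = b j0
    & forall j, j \in S -> forall p q, 3 <= val p -> 3 <= val q ->
        h p j != b j -> h q j != b j -> p = q].
Proof.
move=> j0Si; pose R := S :\ i :\ j0.
have cardR : k.+1 <= #|R| + 3.
  by move: hSk; rewrite (cardsD1 i S) iS (cardsD1 j0 (S :\ i)) j0Si -/R; lia.
have [g [gR g_inj]] := exists_shifted_injection i cardR.
have witness (j : 'I_m) : exists z : {ffun 'I_m -> A},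
    j \in S :\ i -> z \in F /\ {in S :\ j, z =1 b}.
  case: (boolP (j \in S :\ i)) => [/hdel/projSP[z zF hz]|_]; first by exists z.
  by exists b.
have [W hW] := fin_all_exists witness.
have gS p : 3 <= val p -> [/\ g p != j0, g p != i & g p \in S].
  by move/gR; rewrite !inE => /and3P.
have agree p j : 3 <= val p -> j \in S -> g p != j -> W (g p) j = b j.
  move=> hp jS gj; have [_ gi gS'] := gS p hp.
  by apply: (hW _ _).2; rewrite !inE ?gi ?gS' // eq_sym gj.
exists (fun p => W (g p)); split.
- by move=> p hp; have [_ gi gS'] := gS p hp; apply: (hW _ _).1; rewrite !inE gi.
- move=> p hp; have [gj0 gi _] := gS p hp.
  by case/setD1P: j0Si => _ j0S; split; apply: agree.
- move=> j jS p q hp hq hpj hqj; apply: g_inj => //.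
  have devp : g p = j by apply/eqP; apply: contraR hpj => /(agree p j hp jS) ->.
  have devq : g q = j by apply/eqP; apply: contraR hqj => /(agree q j hq jS) ->.
  by rewrite devp devq.
Qed.

Record edge_state (s : seq 'I_m) (a c d : {ffun 'I_m -> A}) : Prop := EdgeState {
  edge_state_in : [/\ a \in F, c \in F & d \in F];
  edge_state_a : {in S :\ i, a =1 b};
  edge_state_cd : {in prefix i, c =1 d};
  edge_state_ac : a i = c i;
  edge_state_d : d i = b i;
  edge_state_c : {in s, c =1 b} }.

Lemma edge_state_cons s a c d j0 :
    j0 \in S :\ i -> {subset s <= S :\ i} -> edge_state s a c d ->
  exists a' c' d', edge_state (j0 :: s) a' c' d'.
Proof.
move=> j0Si sSi [[aF cF dF] ha hcd eac edb hc].
have [h [hF3 hij0 h_once]] := edge_witnesses j0Si.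
have nu j : j \in S -> t (mix (b j) (b j) (b j) (fun p => h p j)) = b j.
  by move=> jS; apply: edge_mix_nu => //; apply: h_once.
have inS j : j \in S :\ i -> j \in S by case/setD1P.
exists (edge_comb t a a a h), (edge_comb t c a c h), (edge_comb t c a d h).
split.
- by split; apply: (edge_comb_in hF ht).
- by move=> j jSi; rewrite edge_combE !ha // nu ?inS.
- by move=> j jpre; rewrite !edge_combE hcd.
- by rewrite !edge_combE eac.
- by rewrite edge_combE -eac edb; apply: edge_mix_yyx => // p /hij0[].
move=> j; rewrite inE => /predU1P[->|js]; rewrite edge_combE.
  by rewrite (ha j0) //; apply: edge_mix_yxy => // p /hij0[].
by rewrite hc // ha ?sSi // nu ?inS ?sSi.
Qed.

Lemma proj_extend (G : {set {ffun 'I_m -> A}}) :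
    b \in G -> F \subset G -> phi i G \subset phi i F ->
    (forall j, j \in S -> val j <= val i) ->
    proj (prefix i) b \in projS (prefix i) F ->
  proj S b \in projS S F.
Proof.
move=> bG FG hphi i_max /projSP[a0 a0F ha0].
have : (a0 i, b i) \in phi i G by apply/phiP; exists a0, b; rewrite (subsetP FG).
move/(subsetP hphi)/phiP=> [c0 [d0 [c0F d0F hcd0 [ec0 ed0]]]].
have lt_i j : j \in S :\ i -> val j < val i.
  by case/setD1P=> ji jS; rewrite ltn_neqAle i_max // andbT (inj_eq val_inj).
have : exists a c d, edge_state (enum (S :\ i)) a c d.
  have : {subset enum (S :\ i) <= S :\ i} by move=> j; rewrite mem_enum.
  elim: (enum _) => [|j0 s IHs] sSi.
    by exists a0, c0, d0; split => // j /lt_i ji; apply: ha0; rewrite inE.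
  have sS : {subset s <= S :\ i} by move=> j js; apply: sSi; rewrite inE js orbT.
  have [a [c [d st]]] := IHs sS.
  exact: edge_state_cons (sSi j0 (mem_head _ _)) sS st.
move=> [a [c [d [[_ _ dF] _ hcd _ edb hc]]]].
apply/projSP; exists d => // j jS; case: (eqVneq j i) => [->//|ji].
have jSi : j \in S :\ i by rewrite !inE ji.
by rewrite -hcd ?inE ?lt_i // hc // mem_enum.
Qed.

End Extension.

Section Main.
Variables (A : finType) (I : Type) (ar : I -> nat).
Variables (op : forall i : I, ('I_(ar i) -> A) -> A) (k m : nat).
Variables (t : ('I_k.+1 -> A) -> A) (F G : {set {ffun 'I_m -> A}}).
Hypotheses (hk : 0 < k) (ht : term_op op t) (he : edge_op t).
Hypotheses (hF : subuniverse op F) (hFG : F \subset G).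
Hypothesis hproj : forall T : {set 'I_m}, #|T| < k -> projS T F = projS T G.
Hypothesis hphi : forall i : 'I_m, phi i G \subset phi i F.
Variables (b : {ffun 'I_m -> A}) (hb : b \in G).

Lemma proj_small (S : {set 'I_m}) : #|S| < k -> proj S b \in projS S F.
Proof. by move=> hS; rewrite hproj //; apply: imset_f. Qed.

Lemma proj_bounded n (S : {set 'I_m}) :
  (forall j, j \in S -> val j < n) -> proj S b \in projS S F.
Proof.
elim: n S => [|n IHn] S hS.
  have -> : S = set0 by apply/setP => j; rewrite inE; apply/negbTE/negP => /hS.
  by apply: proj_small; rewrite cards0.
have [c] := ubnP #|S|; elim: c S hS => // c IHc S hS hc.
case: (pickP [pred j in S | val j == n]) => [i /andP[iS /eqP hi]|none]; last first.
  apply: IHn => j jS; have := hS j jS; rewrite ltnS leq_eqVlt => /predU1P[ejn|//].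
  by have := none j; rewrite /= jS ejn eqxx.
case: (ltnP #|S| k) => [/proj_small //|hSk].
apply: (proj_extend hF ht he hSk iS _ hb hFG (hphi i)).
- move=> j jSi; apply: IHc.
    by move=> x; rewrite inE => /andP[_ /hS].
  by rewrite (cardsD1 j S) (setD1P jSi).2 in hc.
- by move=> j /hS; rewrite hi.
- by apply: IHn => j; rewrite inE hi.
Qed.

End Main.

Theorem lemma4p1 (A : finType) (I : Type) (ar : I -> nat)
    (op : forall i : I, ('I_(ar i) -> A) -> A) (k m : nat)
    (hk : 1 < k) (hm : 0 < m)
    (hedge : exists t : ('I_k.+1 -> A) -> A, term_op op t /\ edge_op t)
    (F G : {set {ffun 'I_m -> A}})
    (hF : subuniverse op F) (hG : subuniverse op G) (hFG : F \subset G)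
    (hproj : forall T : {set 'I_m}, #|T| < k -> projS T F = projS T G)
    (hphi : forall i : 'I_m, phi i G \subset phi i F) :
  F = G.
Proof.
have [t [ht he]] := hedge.
apply/eqP; rewrite eqEsubset hFG; apply/subsetP => b hb.
have /projSP[a aF ha] := proj_bounded (ltnW hk) ht he hF hFG hproj hphi hb
  (S := [set: 'I_m]) (fun j _ => ltn_ord j).
by rewrite (_ : b = a) //; apply/ffunP => j; rewrite ha ?inE.
Qed.
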